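(* Let $J\subseteq S$. For every $w\in\mathfrak{S}_n^J$ there is a unique $w'\in\mathfrak{S}_n^J(231)$ such that $\mathrm{inv}(w')$ is the maximum under containment among all $J$-compressed inversion sets $\mathrm{inv}(u)$, $u\in\mathfrak{S}_n^J$, with $\mathrm{inv}(u)\subseteq\mathrm{inv}(w)$; that is, $\mathrm{inv}(w')\subseteq\mathrm{inv}(w)$, $\mathrm{inv}(w')$ is $J$-compressed, and every $u\in\mathfrak{S}_n^J$ with $\mathrm{inv}(u)$ $J$-compressed and $\mathrm{inv}(u)\subseteq\mathrm{inv}(w)$ satisfies $\mathrm{inv}(u)\subseteq\mathrm{inv}(w')$.
   Context: $\mathfrak{S}_n$ is the symmetric group on $[n]$, $s_i=(i,i+1)$, $S=\{s_1,\dots,s_{n-1}\}$, one-line notation $w=w_1\cdots w_n$, $\mathrm{inv}(w)=\{(i,j):i<j,\ w_i>w_j\}$, $\mathrm{des}(w)=\{(i,j)\in\mathrm{inv}(w):w_i=w_j+1\}$. For $J\subseteq S$, $\mathfrak{S}_n^J$ is the set of $w$ with $w_i<w_{i+1}$ whenever $s_i\in J$. Writing $J=S\setminus\{s_{j_1},\dots,s_{j_r}\}$ with $j_1<\dots<j_r$, the $J$-regions are $\{1,\dots,j_1\},\{j_1+1,\dots,j_2\},\dots,\{j_r+1,\dots,n\}$. $\mathfrak{S}_n^J(231)$ is the set of $w\in\mathfrak{S}_n^J$ admitting no indices $i<j<k$ in pairwise different $J$-regions with $w_k<w_i<w_j$ and $w_i=w_k+1$. A set $\mathrm{inv}(w)$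 is $J$-compressed if whenever $i<j<k$ lie in pairwise different $J$-regions and $(i,k)\in\mathrm{des}(w)$, then $(i,j)\in\mathrm{inv}(w)$. *)

From mathcomp Require Import all_boot all_fingroup.
Set Implicit Arguments. Unset Strict Implicit. Unset Printing Implicit Defensive.

(* Conventions: positions and values are 0-indexed, in 'I_n.
   w : {perm 'I_n}, one-line notation w_i := w i.
   The simple transposition s_{k+1} (paper) swaps positions k and k+1 (0-based);
   it is represented by k : 'I_n.-1.  J : {set 'I_n.-1}. *)

Section Defs.
Variable n : nat.

Definition invset (w : {perm 'I_n}) : {set ('I_n * 'I_n)%type} :=
  [set p : ('I_n * 'I_n)%type | (p.1 < p.2) && (w p.2 < w p.1)].

Definition des (w : {perm 'I_n}) : {set ('I_n * 'I_n)%type} :=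
  [set p in invset w | val (w p.1) == (w p.2).+1].

Definition inJ (J : {set 'I_n.-1}) (k : nat) : bool :=
  [exists t : 'I_n.-1, (val t == k) && (t \in J)].

Definition parabolic (J : {set 'I_n.-1}) (w : {perm 'I_n}) : bool :=
  [forall i : 'I_n, forall j : 'I_n,
     ((val j == (val i).+1) && inJ J i) ==> (w i < w j)].

Definition same_region (J : {set 'I_n.-1}) (i j : 'I_n) : bool :=
  [forall k : 'I_n.-1, ((minn i j <= k) && (k < maxn i j)) ==> (k \in J)].

Definition pw_diff_regions (J : {set 'I_n.-1}) (i j k : 'I_n) : bool :=
  [&& ~~ same_region J i j, ~~ same_region J j k & ~~ same_region J i k].

Definition avoids231 (J : {set 'I_n.-1}) (w : {perm 'I_n}) : bool :=
  parabolic J w &&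
  ~~ [exists i : 'I_n, exists j : 'I_n, exists k : 'I_n,
        [&& i < j, j < k, pw_diff_regions J i j k,
            w k < w i, w i < w j & val (w i) == (w k).+1]].

Definition J_compressed (J : {set 'I_n.-1}) (w : {perm 'I_n}) : bool :=
  [forall i : 'I_n, forall j : 'I_n, forall k : 'I_n,
     [&& i < j, j < k, pw_diff_regions J i j k & (i, k) \in des w]
       ==> ((i, j) \in invset w)].

End Defs.

From mathcomp Require Import all_boot all_fingroup zify.

(* If inv(w) is not J-compressed, it contains a descent (i, k), w_i = w_k + 1,
   with a witness j such that (i, j) is not an inversion.  Swapping the adjacent
   values w_i and w_k removes exactly (i, k) from inv(w), and (i, k) lies in no
   J-compressed inv(u) contained in inv(w).  Repeating the swap therefore ends
   at the largest J-compressed inversion set below inv(w).  Its permutation is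
   in S_n^J because its inversion set is contained in inv(w); it avoids the
   J-231 pattern because such a pattern is a descent violating compression; and
   it is unique because a permutation is determined by its inversion set. *)

Lemma crossing_step (P : pred nat) a b :
  a <= b -> P a -> ~~ P b -> exists2 m, a <= m < b & P m && ~~ P m.+1.
Proof.
elim: b => [|b IHb]; first by rewrite leqn0 => /eqP-> ->.
rewrite leq_eqVlt => /orP[/eqP-> -> //|]; rewrite ltnS => ab Pa nPb.
case Pb: (P b); first by exists b; [rewrite ab /= | rewrite Pb].
have [m /andP[am mb] Pm] := IHb ab Pa (negbT Pb).
by exists m; rewrite // am ltnS ltnW.
Qed.

Section Inversions.
Context {n : nat}.
Implicit Types (w u : {perm 'I_n}) (i j k x y : 'I_n) (J : {set 'I_n.-1}).

Lemma mem_invset w x y : ((x, y) \in invset w) = (x < y) && (w y < w x).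
Proof. by rewrite inE. Qed.

Lemma mem_des w x y :
  ((x, y) \in des w) = [&& x < y, w y < w x & w x == (w y).+1 :> nat].
Proof. by rewrite !inE andbA. Qed.

Lemma perm_val_eq w x y : (w x == w y :> nat) = (x == y :> nat).
Proof. by rewrite !(inj_eq (@ord_inj n)) (inj_eq perm_inj). Qed.

Lemma perm_val_surj w v : v < n -> exists x, w x = v :> nat.
Proof. by move=> vn; exists ((w^-1)%g (Ordinal vn)); rewrite permKV. Qed.

Lemma card_ord_ltn m : m <= n -> #|[set z : 'I_n | z < m]| = m.
Proof. by move=> mn; rewrite cardsE -sum1_card (big_ord_narrow mn) sum1_card card_ord. Qed.

Lemma card_perm_ltn w x : #|[set y | w y < w x]| = w x.
Proof.
have -> : [set y | w y < w x] = w @^-1: [set z : 'I_n | z < w x].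
  by apply/setP=> y; rewrite !inE.
by rewrite card_preimset ?card_ord_ltn //; [apply: ltnW | apply: perm_inj].
Qed.

Lemma invset_inj : injective (@invset n).
Proof.
move=> a b eq_ab.
have same_order x y : (a x < a y) = (b x < b y).
  have mem_ab x' y' : ((x', y') \in invset a) = ((x', y') \in invset b) by rewrite eq_ab.
  case: (ltngtP x y) => [xy|yx|/ord_inj->]; last by rewrite !ltnn.
    move: (mem_ab x y); rewrite !mem_invset xy.
    have := perm_val_eq a x y; have := perm_val_eq b x y; lia.
  by move: (mem_ab y x); rewrite !mem_invset yx.
apply/permP=> x; apply: ord_inj.
by rewrite -card_perm_ltn -[RHS]card_perm_ltn; apply: eq_card => y; rewrite !inE same_order.
Qed.

Lemma ltn_tperm_adjacent (a b p q : 'I_n) : a = b.+1 :> nat ->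
  (p, q) != (a, b) -> (p, q) != (b, a) -> (tperm a b q < tperm a b p) = (q < p).
Proof.
have neq_val (x y : 'I_n) : x <> y -> x <> y :> nat by move=> + /ord_inj.
rewrite !xpair_eqE -!(inj_eq (@ord_inj n)) => ab.
by case: tpermP => [->|->|/neq_val ? /neq_val ?];
   case: tpermP => [->|->|/neq_val ? /neq_val ?]; lia.
Qed.

Lemma invset_mul_tperm_des w i k : (i, k) \in des w ->
  invset (w * tperm (w i) (w k)) = invset w :\ (i, k).
Proof.
rewrite mem_des => /and3P[ik _ /eqP wik].
apply/setP=> -[x y]; rewrite in_setD1 !mem_invset !permM.
have [[-> ->]|xy_ik] := eqVneq (x, y) (i, k).
  by rewrite tpermL tpermR wik; lia.
rewrite /=; case: (ltnP x y) => //= xy.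
apply: ltn_tperm_adjacent; rewrite // !xpair_eqE !(inj_eq perm_inj).
  by move: xy_ik; rewrite xpair_eqE.
by apply/negP=> /andP[/eqP xk /eqP yi]; move: xy; rewrite xk yi ltnNge ltnW.
Qed.

Lemma same_region_sub J (a b c d : 'I_n) :
  a <= c -> c <= d -> d <= b -> same_region J a b -> same_region J c d.
Proof.
move=> ac cd db /forallP ab; apply/forallP=> t; apply/implyP=> ct.
by apply: (implyP (ab t)); lia.
Qed.

Lemma pw_diff_regions_widen J x i j k y :
  x <= i -> i < j -> j < k -> k <= y ->
  pw_diff_regions J i j k -> pw_diff_regions J x j y.
Proof.
move=> xi ij jk ky /and3P[Dij Djk Dik]; apply/and3P; split.
- by apply: contra Dij; apply: same_region_sub; lia.
- by apply: contra Djk; apply: same_region_sub; lia.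
- by apply: contra Dik; apply: same_region_sub; lia.
Qed.

Lemma J_compressed_inv J u x j y : J_compressed J u ->
  x < j -> j < y -> pw_diff_regions J x j y -> (x, y) \in des u -> (x, j) \in invset u.
Proof.
move=> /forallP/(_ x)/forallP/(_ j)/forallP/(_ y)/implyP cu xj jy Dxjy dxy.
by apply: cu; rewrite xj jy Dxjy.
Qed.

Lemma des_value_gap w u i k (m : 'I_n) : (i, k) \in des w -> invset u \subset invset w ->
  i < m < k -> ~~ (u k < u m < u i).
Proof.
rewrite mem_des => /and3P[_ _ /eqP wik] /subsetP uw /andP[im mk].
apply/negP=> /andP[ukm umi].
have: (i, m) \in invset w by apply: uw; rewrite mem_invset im.
have: (m, k) \in invset w by apply: uw; rewrite mem_invset mk.
rewrite !mem_invset => /andP[_ wmk] /andP[_ wim]; lia.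
Qed.

Lemma violating_des_notin_compressed J w u i j k :
  i < j -> j < k -> pw_diff_regions J i j k ->
  (i, k) \in des w -> (i, j) \notin invset w ->
  J_compressed J u -> invset u \subset invset w -> (i, k) \notin invset u.
Proof.
(* As w_i = w_k + 1, no position strictly between i and k carries a u-value
   strictly between u_k and u_i.  Pick adjacent values m, m + 1 in [u_k, u_i]
   with m at a position y > j and m + 1 at a position x <= j; then x <= i and
   k <= y, and compression at the descent (x, y) of u gives u_x > u_j > u_i. *)
move=> ij jk Dijk dik ij_w cu uw; apply/negP=> iku.
have gap m := @des_value_gap w u i k m dik uw.
have /andP[_ uki] : (i < k) && (u k < u i) by rewrite -mem_invset.
have uij : u i < u j.
  have: (i, j) \notin invset u by apply: contra ij_w; apply: (subsetP uw).
  rewrite mem_invset ij /=; have := perm_val_eq u i j; lia.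
pose after v := [exists y, (u y == v :> nat) && (j < y)].
have [m /andP[ukm mui] /andP[/existsP[y /andP[/eqP uym jy]] /existsPn not_after]] :
    exists2 m, u k <= m < u i & after m && ~~ after m.+1.
  apply: crossing_step; first exact: ltnW.
    by apply/existsP; exists k; rewrite eqxx jk.
  apply/negP=> /existsP[y /andP[/eqP/ord_inj/perm_inj-> ]].
  by rewrite ltnNge ltnW.
have [x uxm] := @perm_val_surj u m.+1 (leq_ltn_trans mui (ltn_ord (u i))).
have xj : x <= j by move: (not_after x); rewrite uxm eqxx -leqNgt.
have ky : k <= y.
  by have := gap y; have := perm_val_eq u y k; have := perm_val_eq u y i; lia.
have xi : x <= i.
  by have := gap x; have := perm_val_eq u x k; have := perm_val_eq u x i; lia.
have: (x, j) \in invset u.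
  apply: (@J_compressed_inv J u x j y cu); [lia | lia | | ].
    exact: pw_diff_regions_widen xi ij jk ky Dijk.
  by rewrite mem_des uym uxm; apply/and3P; split; [lia | lia | ].
rewrite mem_invset; lia.
Qed.

Lemma exists_max_compressed_sub J w :
  exists w', [/\ invset w' \subset invset w, J_compressed J w' &
    forall u, J_compressed J u -> invset u \subset invset w -> invset u \subset invset w'].
Proof.
have [N] := ubnP #|invset w|; elim: N w => // N IHN w /ltnSE-small.
have [cw|] := boolP (J_compressed J w); first by exists w; split.
move=> /forallPn[i /forallPn[j /forallPn[k]]].
rewrite negb_imply => /andP[/and4P[ij jk Dijk dik] ij_w].
have ik_w : (i, k) \in invset w by move: dik; rewrite mem_des mem_invset => /and3P[-> ->].
have inv_w2 := invset_mul_tperm_des _ _ _ dik.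
have [|w' [w'w2 cw' w'max]] := IHN (w * tperm (w i) (w k))%g.
  by move: small; rewrite inv_w2 (cardsD1 (i, k) (invset w)) ik_w.
exists w'; split=> // [|u cu uw].
  by apply: subset_trans w'w2 _; rewrite inv_w2 subsetDl.
apply: w'max => //.
rewrite inv_w2 subsetD1 uw.
exact: violating_des_notin_compressed ij jk Dijk dik ij_w cu uw.
Qed.

Lemma parabolic_sub J w u : parabolic J w -> invset u \subset invset w -> parabolic J u.
Proof.
move=> /forallP pw /subsetP uw; apply/forallP=> x; apply/forallP=> y.
apply/implyP=> /andP[/eqP /= yx xJ].
have wxy : w x < w y by apply: (implyP (forallP (pw x) y)); rewrite xJ andbT; apply/eqP.
have: (x, y) \notin invset u.
  by apply: contra (uw _) _; rewrite mem_invset; lia.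
rewrite mem_invset; have := perm_val_eq u x y; lia.
Qed.

Lemma compressed_avoids231 J u : parabolic J u -> J_compressed J u -> avoids231 J u.
Proof.
move=> pu cu; rewrite /avoids231 pu /=.
apply/existsP=> -[i /existsP[j /existsP[k /and4P[ij jk Dijk /and3P[uki uij uik]]]]].
have: (i, j) \in invset u.
  by apply: J_compressed_inv Dijk _; rewrite // mem_des (ltn_trans ij jk) uki.
by rewrite mem_invset ij ltnNge ltnW.
Qed.

End Inversions.

Theorem lemma3p8 (n : nat) (J : {set 'I_n.-1}) (w : {perm 'I_n}) :
  parabolic J w ->
  exists! w' : {perm 'I_n},
    [/\ avoids231 J w',
        invset w' \subset invset w,
        J_compressed J w' &
        forall u : {perm 'I_n},
          parabolic J u -> J_compressed J u -> invset u \subset invset w ->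
          invset u \subset invset w'].
Proof.
move=> pw; have [w' [w'w cw' w'max]] := exists_max_compressed_sub J w.
have pw' := parabolic_sub J w w' pw w'w.
exists w'; split; first by split=> // [|u _]; [exact: compressed_avoids231 | exact: w'max].
move=> v [_ vw cv vmax]; apply: invset_inj; apply/eqP; rewrite eqEsubset.
by rewrite (vmax w' pw' cw' w'w) (w'max v cv vw).
Qed.
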